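(* Let $f:[0,\infty)\to[0,\infty)$ be non-increasing with $f(0)=1$ and $f\in C^4([0,\infty))$, let $\mathcal L(\gamma)=\int_0^\infty e^{-\gamma x}f(x)dx$ and $\gamma_{\min}=\inf\{\gamma\in\mathbb R:\mathcal L(\gamma)<\infty\}$, and assume that for every $\gamma>\gamma_{\min}$ and $j=0,1,2,3,4$, $e^{-\gamma x}f^{(j)}(x)\in L^1([0,\infty))$ and $e^{-\gamma x}f^{(j)}(x)\to0$ as $x\to\infty$. For $s\ge1$ and $\rho=1-\gamma/\sqrt s$ define $F_s(\rho)=\sum_{n=0}^\infty f\bigl(\tfrac{n+1}{\sqrt s}\bigr)\rho^{n+1}$. Then for $\gamma_{\min}<\gamma\le\sqrt s$, $F_s(\rho)=\sqrt s\,\mathcal L(\gamma)+\mathcal M(\gamma)+O(1/\sqrt s)$, with $\mathcal M(\gamma)=\tfrac12\gamma^2\mathcal L'(\gamma)-\tfrac12$, where the $O(1/\sqrt s)$ holds uniformly in $\gamma$ in any compact subset of $(\gamma_{\min},\infty)$. Moreover, to leading order this $O(1/\sqrt s)$ term equals $\mathcal N(\gamma)/\sqrt s$, where $\mathcal N(\gamma)=\tfrac13\gamma^3\mathcal L'(\gamma)+\tfrac18\gamma^4\mathcal L''(\gamma)+\tfrac1{12}(\gamma-f'(0))$.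
   Context: $F_s(\rho)$ is the quantity $\sum_{n\ge0}p_s(0)\cdots p_s(n)\rho^{n+1}$ for an $s$-server system with admission control under the global control $p_s(0)\cdots p_s(n)=f((n+1)/\sqrt s)$. *)

From Stdlib Require Import Reals Lra.
From Coquelicot Require Export Coquelicot.
Open Scope R_scope.

Definition deriv_on_nonneg (g g' : R -> R) : Prop :=
  (forall x, 0 < x -> is_derive g x (g' x)) /\
  filterlim (fun h => (g h - g 0) / h) (at_right 0) (locally (g' 0)).

Definition cont_on_nonneg (g : R -> R) : Prop :=
  (forall x, 0 < x -> continuous g x) /\
  filterlim g (at_right 0) (locally (g 0)).

Definition Lap (f : R -> R) (g : R) : R :=
  RInt_gen (fun x => exp (- (g * x)) * f x) (at_point 0) (Rbar_locally p_infty).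

Definition gamma_min (f : R -> R) : Rbar :=
  Glb_Rbar (fun g => ex_RInt_gen (fun x => exp (- (g * x)) * f x)
                        (at_point 0) (Rbar_locally p_infty)).

Definition Fterm (f : R -> R) (s rho : R) (n : nat) : R :=
  f (INR (S n) / sqrt s) * rho ^ (S n).

Definition Mfun (f : R -> R) (g : R) : R :=
  / 2 * g ^ 2 * Derive (Lap f) g - / 2.

Definition Nfun (f : R -> R) (f'0 : R) (g : R) : R :=
  / 3 * g ^ 3 * Derive (Lap f) g + / 8 * g ^ 4 * Derive_n (Lap f) 2 g
  + / 12 * (g - f'0).

From Stdlib Require Import Reals Lra Lia Psatz.
From Coquelicot Require Import Coquelicot.
Open Scope R_scope.

(* Put h = 1/sqrt s and write rho = 1 - gamma h as exp (- beta h).  Then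
   F_s(rho) = sum_{k>=1} phi(k h) with phi(x) = exp (- beta x) f(x), and the
   Euler-Maclaurin formula with third-order remainder gives
     F_s(rho) = L(beta)/h - phi(0)/2 - h phi'(0)/12 + O(h^2),
   the error being bounded by h^2 times the L^1 norm of the third derivative of
   phi.  Expanding beta = gamma + gamma^2 h/2 + gamma^3 h^2/3 + O(h^3) and L(beta)
   to second order around gamma (the derivatives of L are moments of
   exp (- gamma x) f(x)) produces M(gamma) at order 1 and N(gamma) at order h.
   The constants depend on gamma only through a bound on |gamma| and its distance
   to gamma_min, whence uniformity on compact sets. *)

(* Specialisations of Coquelicot's integration lemmas to [R], whose module
   structure is not found by unification. *)
Lemma ex_RInt_Chasles_2_R (f : R -> R) a b c :
  a <= b <= c -> ex_RInt f a c -> ex_RInt f b c.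
Proof. exact (@ex_RInt_Chasles_2 R_CompleteNormedModule f a b c). Qed.

Lemma RInt_Chasles_R (f : R -> R) a b c :
  ex_RInt f a b -> ex_RInt f b c -> RInt f a b + RInt f b c = RInt f a c.
Proof. exact (@RInt_Chasles R_CompleteNormedModule f a b c). Qed.

Lemma ex_RInt_continuous_R (f : R -> R) a b :
  (forall z, Rmin a b <= z <= Rmax a b -> continuous f z) -> ex_RInt f a b.
Proof. exact (@ex_RInt_continuous R_CompleteNormedModule f a b). Qed.

Lemma ex_RInt_continuous_all (f : R -> R) a b :
  (forall z, continuous f z) -> ex_RInt f a b.
Proof. intros Hc. apply ex_RInt_continuous_R. intros; apply Hc. Qed.

Lemma continuous_of_is_derive (p : R -> R) x l : is_derive p x l -> continuous p x.
Proof. intros H. apply (ex_derive_continuous (K:=R_AbsRing) (V:=R_NormedModule)). now exists l. Qed.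

Lemma exp_le_exp x y : x <= y -> exp x <= exp y.
Proof. intros [H|H]; [left; apply exp_increasing; auto | subst; lra]. Qed.

(** * Improper integrals on [0, +oo) *)

Definition is_RInt_pinfty (u : R -> R) (l : R) : Prop :=
  (forall b, 0 <= b -> ex_RInt u 0 b) /\
  filterlim (fun b => RInt u 0 b) (Rbar_locally p_infty) (locally l).

Lemma is_RInt_pinfty_gen u l :
  is_RInt_pinfty u l -> is_RInt_gen u (at_point 0) (Rbar_locally p_infty) l.
Proof.
  intros [Hex Hl] P HP.
  destruct (Hl P HP) as [M HM].
  exists (fun x => x = 0) (fun b => Rmax M 0 < b).
  - reflexivity.
  - now exists (Rmax M 0).
  - intros x y -> Hy. exists (RInt u 0 y). split.
    + apply (@RInt_correct R_CompleteNormedModule), Hex. generalize (Rmax_r M 0); lra.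
    + apply HM. generalize (Rmax_l M 0); lra.
Qed.

Lemma RInt_gen_pinfty u l :
  is_RInt_pinfty u l -> RInt_gen u (at_point 0) (Rbar_locally p_infty) = l.
Proof. intro H. apply is_RInt_gen_unique, is_RInt_pinfty_gen, H. Qed.

Lemma is_RInt_pinfty_unique u l1 l2 : is_RInt_pinfty u l1 -> is_RInt_pinfty u l2 -> l1 = l2.
Proof. intros H1 H2. rewrite <- (RInt_gen_pinfty _ _ H1). now apply RInt_gen_pinfty. Qed.

Lemma ex_RInt_gen_pinfty u :
  (forall b, 0 <= b -> ex_RInt u 0 b) ->
  ex_RInt_gen u (at_point 0) (Rbar_locally p_infty) ->
  is_RInt_pinfty u (RInt_gen u (at_point 0) (Rbar_locally p_infty)).
Proof.
  intros Hex Hg. split; [exact Hex|].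
  intros P HP.
  assert (Hc : is_RInt_gen u (at_point 0) (Rbar_locally p_infty)
                 (RInt_gen u (at_point 0) (Rbar_locally p_infty))).
  { apply (@RInt_gen_correct R_CompleteNormedModule); [| |exact Hg];
      apply Proper_StrongProper; [apply at_point_filter|apply Rbar_locally_filter]. }
  destruct (Hc P HP) as [Q1 Q2 HQ1 [M HM] HQ].
  exists (Rmax M 0). intros y Hy.
  destruct (HQ 0 y HQ1 (HM y (Rle_lt_trans _ _ _ (Rmax_l M 0) Hy))) as [z [Hz Pz]].
  replace (RInt u 0 y) with z; [exact Pz|].
  symmetry. now apply is_RInt_unique.
Qed.

Lemma is_RInt_pinfty_tail u l (eps : posreal) :
  is_RInt_pinfty u l -> exists M, forall b, M <= b -> 0 <= b /\ Rabs (RInt u 0 b - l) < eps.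
Proof.
  intros [_ Hl].
  destruct (Hl (fun y => Rabs (y - l) < eps)) as [M HM]; [now exists eps|].
  exists (Rmax M 0 + 1). intros b Hb.
  generalize (Rmax_l M 0) (Rmax_r M 0). intros. split; [lra|]. apply HM. lra.
Qed.

Lemma is_RInt_pinfty_ext u v l :
  (forall x, 0 < x -> u x = v x) -> is_RInt_pinfty u l -> is_RInt_pinfty v l.
Proof.
  intros He [Hex Hl]. split.
  - intros b Hb. apply ex_RInt_ext with u; [|auto].
    intros x Hx. apply He. rewrite Rmin_left in Hx; lra.
  - eapply filterlim_ext_loc; [|exact Hl].
    exists 0. intros b Hb. apply RInt_ext. intros x Hx.
    apply He. rewrite Rmin_left in Hx; lra.
Qed.

Lemma is_RInt_pinfty_plus u v lu lv :
  is_RInt_pinfty u lu -> is_RInt_pinfty v lv -> is_RInt_pinfty (fun x => u x + v x) (lu + lv).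
Proof.
  intros [Hu Hlu] [Hv Hlv]. split.
  - intros b Hb. apply (ex_RInt_plus u v); auto.
  - eapply filterlim_ext_loc.
    2: { apply (filterlim_comp_2 _ _ Rplus Hlu Hlv), (filterlim_plus lu lv). }
    exists 0. intros b Hb. symmetry.
    apply (RInt_plus (V:=R_CompleteNormedModule)); [apply Hu|apply Hv]; lra.
Qed.

Lemma is_RInt_pinfty_scal k u lu :
  is_RInt_pinfty u lu -> is_RInt_pinfty (fun x => k * u x) (k * lu).
Proof.
  intros [Hu Hlu]. split.
  - intros b Hb. apply (ex_RInt_scal u); auto.
  - eapply filterlim_ext_loc.
    2: { eapply filterlim_comp; [exact Hlu|].
         apply (filterlim_scal_r (K:=R_AbsRing) (V:=R_NormedModule) k lu). }
    exists 0. intros b Hb. symmetry. apply (RInt_scal (V:=R_CompleteNormedModule)), Hu; lra.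
Qed.

Lemma is_RInt_pinfty_minus u v lu lv :
  is_RInt_pinfty u lu -> is_RInt_pinfty v lv -> is_RInt_pinfty (fun x => u x - v x) (lu - lv).
Proof.
  intros H1 H2.
  apply (is_RInt_pinfty_ext (fun x => u x + -1 * v x)); [intros; ring|].
  replace (lu - lv) with (lu + -1 * lv) by ring.
  now apply is_RInt_pinfty_plus, is_RInt_pinfty_scal.
Qed.

Lemma is_RInt_pinfty_le u v lu lv :
  is_RInt_pinfty u lu -> is_RInt_pinfty v lv -> (forall x, 0 <= x -> u x <= v x) -> lu <= lv.
Proof.
  intros Hu Hv Hle.
  destruct (Rle_lt_dec lu lv) as [H|H]; [exact H|].
  assert (He : 0 < (lu - lv) / 2) by lra.
  destruct (is_RInt_pinfty_tail u lu (mkposreal _ He) Hu) as [M1 HM1].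
  destruct (is_RInt_pinfty_tail v lv (mkposreal _ He) Hv) as [M2 HM2].
  simpl in *.
  destruct (HM1 (Rmax M1 M2) (Rmax_l _ _)) as [Hb H1].
  destruct (HM2 (Rmax M1 M2) (Rmax_r _ _)) as [_ H2].
  assert (RInt u 0 (Rmax M1 M2) <= RInt v 0 (Rmax M1 M2)).
  { apply RInt_le; [exact Hb|apply Hu, Hb|apply Hv, Hb|intros; apply Hle; lra]. }
  apply Rabs_def2 in H1. apply Rabs_def2 in H2. lra.
Qed.

Lemma is_RInt_pinfty_ge0 u l :
  is_RInt_pinfty u l -> (forall x, 0 <= x -> 0 <= u x) -> 0 <= l.
Proof.
  intros H Hp. replace 0 with (0 * l) by ring.
  apply (is_RInt_pinfty_le _ _ _ _ (is_RInt_pinfty_scal 0 _ _ H) H).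
  intros x Hx. specialize (Hp x Hx). lra.
Qed.

(* Cauchy criterion for [b |-> RInt u 0 b], with tails controlled by those of [v]. *)
Lemma is_RInt_pinfty_dominated_ex (u v : R -> R) (lv : R) :
  (forall x, continuous u x) -> (forall x, 0 <= x -> Rabs (u x) <= v x) ->
  is_RInt_pinfty v lv -> exists lu, is_RInt_pinfty u lu.
Proof.
  intros Hc Hle Hv.
  assert (Hexa : forall a b, ex_RInt (fun x => Rabs (u x)) a b).
  { intros a b. apply ex_RInt_continuous_all. intros z.
    apply (continuous_comp u Rabs); [apply Hc|apply continuous_Rabs]. }
  assert (Hexv : forall a b, 0 <= a <= b -> ex_RInt v a b).
  { intros a b Hab. apply ex_RInt_Chasles_2_R with 0; [lra|]. apply Hv. lra. }
  assert (Htail : forall eps : posreal, exists M, forall b1 b2, M <= b1 -> b1 <= b2 ->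
            Rabs (RInt u 0 b2 - RInt u 0 b1) < eps).
  { intros eps.
    assert (He2 : 0 < eps / 2) by (destruct eps; simpl; lra).
    destruct (is_RInt_pinfty_tail v lv (mkposreal _ He2) Hv) as [M HM]. simpl in HM.
    exists M. intros b1 b2 H1 H2.
    destruct (HM b1 H1) as [Hb1 A1]. destruct (HM b2 (Rle_trans _ _ _ H1 H2)) as [Hb2 A2].
    rewrite <- (RInt_Chasles_R u 0 b1 b2) by now apply ex_RInt_continuous_all.
    replace (RInt u 0 b1 + RInt u b1 b2 - RInt u 0 b1) with (RInt u b1 b2) by lra.
    eapply Rle_lt_trans; [apply abs_RInt_le; [lra|now apply ex_RInt_continuous_all]|].
    eapply Rle_lt_trans.
    { apply RInt_le with (g := v); [lra|apply Hexa|apply Hexv; lra|].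
      intros x Hx. apply Hle; lra. }
    rewrite <- (RInt_Chasles_R v 0 b1 b2) in A2 by (apply Hexv; lra).
    apply Rabs_def2 in A1. apply Rabs_def2 in A2. lra. }
  destruct (filterlim_locally_cauchy (U := R_CompleteSpace) (F := Rbar_locally p_infty)
              (fun b => RInt u 0 b)) as [[y Hy] _].
  { intros eps. destruct (Htail eps) as [M HM].
    exists (fun b => M <= b). split; [exists M; intros; lra|].
    intros b1 b2 H1 H2. change (Rabs (RInt u 0 b2 - RInt u 0 b1) < eps).
    destruct (Rle_lt_dec b1 b2).
    - apply HM; auto.
    - rewrite Rabs_minus_sym. apply HM; auto; lra. }
  exists y. split; [intros; now apply ex_RInt_continuous_all|exact Hy].
Qed.

Lemma is_RInt_pinfty_dominated (u v : R -> R) (lv : R) :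
  (forall x, continuous u x) -> (forall x, 0 <= x -> Rabs (u x) <= v x) ->
  is_RInt_pinfty v lv -> exists lu, is_RInt_pinfty u lu /\ Rabs lu <= lv.
Proof.
  intros Hc Hle Hv.
  destruct (is_RInt_pinfty_dominated_ex u v lv Hc Hle Hv) as [y HIu].
  exists y. split; [exact HIu|].
  apply Rabs_le. split.
  - replace (- lv) with (-1 * lv) by ring.
    apply (is_RInt_pinfty_le _ _ _ _ (is_RInt_pinfty_scal (-1) _ _ Hv) HIu).
    intros x Hx. specialize (Hle x Hx). apply Rabs_le_between in Hle. lra.
  - apply (is_RInt_pinfty_le _ _ _ _ HIu Hv).
    intros x Hx. specialize (Hle x Hx). apply Rabs_le_between in Hle. lra.
Qed.

Lemma is_lim_seq_mult_INR_S h : 0 < h -> is_lim_seq (fun M => INR (S M) * h) p_infty.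
Proof.
  intros Hh.
  apply is_lim_seq_ext with (fun M => h * INR (S M)); [intros; ring|].
  replace p_infty with (Rbar_mult h p_infty).
  2: { simpl. destruct (Rle_dec 0 h); [|lra]. destruct (Rle_lt_or_eq_dec 0 h r); auto; lra. }
  apply is_lim_seq_scal_l. apply -> is_lim_seq_incr_1. apply is_lim_seq_INR.
Qed.

Lemma is_RInt_pinfty_seq u l h :
  0 < h -> is_RInt_pinfty u l -> is_lim_seq (fun M => RInt u 0 (INR (S M) * h)) l.
Proof.
  intros Hh [_ Hl]. eapply filterlim_comp; [apply is_lim_seq_mult_INR_S; auto | exact Hl].
Qed.

(** * Extending the derivatives of [f] to the whole line *)

Lemma is_derive_glue0 (A B : R -> R) l :
  A 0 = B 0 ->
  filterlim (fun h => (A h - A 0) / h) (at_right 0) (locally l) ->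
  is_derive B 0 l ->
  is_derive (fun x => if Rle_dec 0 x then A x else B x) 0 l.
Proof.
  intros H0 HA HB.
  apply is_derive_Reals. apply is_derive_Reals in HB.
  intros eps Heps.
  destruct (HB eps Heps) as [d2 Hd2].
  destruct (HA (fun y => Rabs (y - l) < eps)) as [d1 Hd1]; [now exists (mkposreal eps Heps)|].
  assert (Hd : 0 < Rmin d1 d2) by (apply Rmin_pos; [destruct d1|destruct d2]; simpl; auto).
  exists (mkposreal _ Hd). intros h Hh0 Hh. simpl in Hh.
  rewrite Rplus_0_l.
  destruct (Rle_dec 0 0) as [_|C]; [|lra].
  destruct (Rle_dec 0 h) as [Hp|Hn].
  - apply (Hd1 h); [|lra].
    unfold ball; simpl; unfold AbsRing_ball, abs, minus, plus, opp; simpl.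
    replace (h + - 0) with h by ring.
    eapply Rlt_le_trans; [exact Hh|apply Rmin_l].
  - rewrite H0.
    specialize (Hd2 h Hh0 (Rlt_le_trans _ _ _ Hh (Rmin_r _ _))).
    rewrite Rplus_0_l in Hd2. exact Hd2.
Qed.

Section Extension.

Variable fd : nat -> R -> R.
Hypothesis Hder : forall j, (j < 4)%nat -> deriv_on_nonneg (fd j) (fd (S j)).

Definition taylor0 (j : nat) (x : R) : R :=
  match j with
  | 0%nat => fd 0%nat 0 + fd 1%nat 0 * x + fd 2%nat 0 * x^2/2 + fd 3%nat 0 * x^3/6
             + fd 4%nat 0 * x^4/24
  | 1%nat => fd 1%nat 0 + fd 2%nat 0 * x + fd 3%nat 0 * x^2/2 + fd 4%nat 0 * x^3/6
  | 2%nat => fd 2%nat 0 + fd 3%nat 0 * x + fd 4%nat 0 * x^2/2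
  | 3%nat => fd 3%nat 0 + fd 4%nat 0 * x
  | _ => fd 4%nat 0
  end.

Lemma taylor0_0 j : (j <= 4)%nat -> taylor0 j 0 = fd j 0.
Proof. intros H. destruct j as [|[|[|[|[|j]]]]]; unfold taylor0; try field; lia. Qed.

Lemma is_derive_taylor0 j x : (j < 4)%nat -> is_derive (taylor0 j) x (taylor0 (S j) x).
Proof.
  intros H. destruct j as [|[|[|[|j]]]]; try lia; unfold taylor0; auto_derive; auto; field.
Qed.

(* [fd j] continued to [x < 0] by [taylor0 j], which turns the one-sided
   derivatives at 0 into genuine ones. *)
Definition fd_ext (j : nat) (x : R) : R := if Rle_dec 0 x then fd j x else taylor0 j x.

Lemma fd_ext_nonneg j x : 0 <= x -> fd_ext j x = fd j x.
Proof. intros H. unfold fd_ext. destruct (Rle_dec 0 x); auto; lra. Qed.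

Lemma is_derive_fd_ext j x : (j < 4)%nat -> is_derive (fd_ext j) x (fd_ext (S j) x).
Proof.
  intros Hj. destruct (Hder j Hj) as [Hpos H0].
  destruct (Rtotal_order x 0) as [Hn|[->|Hp]].
  - apply is_derive_ext_loc with (taylor0 j).
    + exists (mkposreal (-x) ltac:(lra)). intros y Hy.
      unfold ball in Hy; simpl in Hy; unfold AbsRing_ball, abs, minus, plus, opp in Hy; simpl in Hy.
      apply Rabs_def2 in Hy. unfold fd_ext. destruct (Rle_dec 0 y); auto; lra.
    + unfold fd_ext. destruct (Rle_dec 0 x); [lra|]. now apply is_derive_taylor0.
  - unfold fd_ext at 2. destruct (Rle_dec 0 0) as [_|C]; [|lra].
    apply is_derive_glue0; [symmetry; apply taylor0_0; lia|exact H0|].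
    rewrite <- taylor0_0 by lia. now apply is_derive_taylor0.
  - apply is_derive_ext_loc with (fd j).
    + exists (mkposreal x Hp). intros y Hy.
      unfold ball in Hy; simpl in Hy; unfold AbsRing_ball, abs, minus, plus, opp in Hy; simpl in Hy.
      apply Rabs_def2 in Hy. unfold fd_ext. destruct (Rle_dec 0 y); auto; lra.
    + unfold fd_ext. destruct (Rle_dec 0 x); [|lra]. now apply Hpos.
Qed.

Lemma Derive_fd_ext j x : (j < 4)%nat -> Derive (fun y => fd_ext j y) x = fd_ext (S j) x.
Proof. intros Hj. now apply is_derive_unique, is_derive_fd_ext. Qed.

Definition phi0 b x := exp (-(b*x)) * fd_ext 0 x.
Definition phi1 b x := exp (-(b*x)) * (fd_ext 1 x - b * fd_ext 0 x).
Definition phi2 b x := exp (-(b*x)) * (fd_ext 2 x - 2*b * fd_ext 1 x + b^2 * fd_ext 0 x).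
Definition phi3 b x := exp (-(b*x)) *
  (fd_ext 3 x - 3*b * fd_ext 2 x + 3*b^2 * fd_ext 1 x - b^3 * fd_ext 0 x).

Ltac ex_derive_fd_ext := repeat split; eexists; apply is_derive_fd_ext; lia.
Ltac Derive_fd_ext := repeat (rewrite Derive_fd_ext by lia).

Lemma is_derive_phi0 b x : is_derive (phi0 b) x (phi1 b x).
Proof. unfold phi0, phi1. auto_derive; [ex_derive_fd_ext|Derive_fd_ext; ring]. Qed.

Lemma is_derive_phi1 b x : is_derive (phi1 b) x (phi2 b x).
Proof. unfold phi1, phi2. auto_derive; [ex_derive_fd_ext|Derive_fd_ext; ring]. Qed.

Lemma is_derive_phi2 b x : is_derive (phi2 b) x (phi3 b x).
Proof. unfold phi2, phi3. auto_derive; [ex_derive_fd_ext|Derive_fd_ext; ring]. Qed.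

Lemma continuous_phi3 b x : continuous (phi3 b) x.
Proof.
  apply (ex_derive_continuous (K:=R_AbsRing) (V:=R_NormedModule)).
  unfold phi3. auto_derive. ex_derive_fd_ext.
Qed.

Lemma ex_derive_phi0 b x : ex_derive (phi0 b) x.
Proof. eexists. apply is_derive_phi0. Qed.

End Extension.

(** * Euler-Maclaurin summation with a third-order remainder *)

(* [em_kernel h t = - h^3 B_3(t/h) / 6], with [B_3] the third Bernoulli polynomial. *)
Definition em_kernel h t := h * t^2 / 4 - t^3/6 - h^2 * t / 12.

Lemma em_kernel_bound h t : 0 <= t <= h -> Rabs (em_kernel h t) <= h^3.
Proof.
  intros Ht. unfold em_kernel. apply Rabs_le.
  assert (0 <= t^2 <= h^2) by (split; nra).
  assert (0 <= t^3 <= h^3) by (split; [apply pow_le; lra|]; simpl; nra).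
  assert (0 <= h * t^2 <= h^3) by (split; simpl in *; nra).
  assert (0 <= h^2 * t <= h^3) by (split; simpl in *; nra).
  split; lra.
Qed.

Lemma continuous_em_kernel_mul (p : R -> R) h u x :
  continuous p x -> continuous (fun y => em_kernel h (y - u) * p y) x.
Proof.
  intros Hp. apply (continuous_mult (K:=R_AbsRing)); [|exact Hp].
  apply (ex_derive_continuous (K:=R_AbsRing) (V:=R_NormedModule)). unfold em_kernel. auto_derive. auto.
Qed.

Lemma sum_Sn_R (a : nat -> R) n : sum_n a (S n) = sum_n a n + a (S n).
Proof. exact (sum_Sn a n). Qed.

Lemma sum_n_RInt_cells (q : R -> R) h M : (forall a b, ex_RInt q a b) ->
  sum_n (fun n => RInt q (INR n * h) (INR n * h + h)) M = RInt q 0 (INR (S M) * h).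
Proof.
  intros Ex. induction M as [|M IH].
  - rewrite sum_O. f_equal; simpl; ring.
  - rewrite sum_Sn_R.
    etransitivity; [apply (f_equal (fun z => z + RInt q (INR (S M) * h) (INR (S M) * h + h)) IH)|].
    replace (INR (S (S M)) * h) with (INR (S M) * h + h) by (rewrite (S_INR (S M)); ring).
    now apply RInt_Chasles_R.
Qed.

Lemma sum_n_shift (a : nat -> R) M : sum_n (fun n => a (S n)) M = sum_n a (S M) - a 0%nat.
Proof.
  induction M as [|M IH].
  - rewrite sum_Sn_R, !sum_O. lra.
  - rewrite (sum_Sn_R (fun n => a (S n))), (sum_Sn_R a (S M)). lra.
Qed.

Section EulerMaclaurin.

Variables p0 p1 p2 p3 : R -> R.
Hypothesis D0 : forall x, is_derive p0 x (p1 x).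
Hypothesis D1 : forall x, is_derive p1 x (p2 x).
Hypothesis D2 : forall x, is_derive p2 x (p3 x).
Hypothesis C3 : forall x, continuous p3 x.

Lemma ex_RInt_p0 a b : ex_RInt p0 a b.
Proof. apply ex_RInt_continuous_all. intros z. exact (continuous_of_is_derive _ _ _ (D0 z)). Qed.

(* Three integrations by parts against [em_kernel h (x - u)]. *)
Lemma euler_maclaurin_cell u h :
  RInt p0 u (u+h) = h/2*(p0 u + p0 (u+h)) - h^2/12*(p1 (u+h) - p1 u)
     + RInt (fun x => em_kernel h (x-u) * p3 x) u (u+h).
Proof.
  set (G := fun x => em_kernel h (x-u) * p2 x - (h*(x-u)/2 - (x-u)^2/2 - h^2/12) * p1 x
                    + (h/2 - (x-u)) * p0 x).
  assert (HG : is_RInt (fun x => em_kernel h (x-u) * p3 x - p0 x) u (u+h)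
                 (minus (G (u+h)) (G u))).
  { apply (is_RInt_derive (V:=R_CompleteNormedModule)).
    - intros x _. unfold G, em_kernel. auto_derive.
      + repeat split; eexists; eauto.
      + rewrite (is_derive_unique (fun y : R => p0 y) x _ (D0 x)),
          (is_derive_unique (fun y : R => p1 y) x _ (D1 x)),
          (is_derive_unique (fun y : R => p2 y) x _ (D2 x)). field.
    - intros x _. apply (continuous_minus (K:=R_AbsRing) (V:=R_NormedModule)).
      + now apply continuous_em_kernel_mul.
      + exact (continuous_of_is_derive _ _ _ (D0 x)). }
  apply (is_RInt_unique (V:=R_CompleteNormedModule)) in HG.
  assert (Ex3 : ex_RInt (fun x => em_kernel h (x-u) * p3 x) u (u+h)).
  { apply ex_RInt_continuous_all. intros z. now apply continuous_em_kernel_mul. }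
  assert (E : RInt (fun x => em_kernel h (x-u) * p3 x - p0 x) u (u+h) =
     RInt (fun x => em_kernel h (x-u) * p3 x) u (u+h) - RInt p0 u (u+h))
    by exact (RInt_minus (V:=R_CompleteNormedModule) _ _ _ _ Ex3 (ex_RInt_p0 _ _)).
  rewrite E in HG.
  unfold minus, plus, opp in HG. simpl in HG. unfold G in HG.
  replace (u + h - u) with h in HG by ring. replace (u - u) with 0 in HG by ring.
  unfold em_kernel in *. lra.
Qed.

Definition em_remainder h (n : nat) : R :=
  RInt (fun x => em_kernel h (x - INR n * h) * p3 x) (INR n * h) (INR n * h + h).

Lemma euler_maclaurin_partial h M :
  h * sum_n (fun k => p0 (INR k * h)) (S M) =
  RInt p0 0 (INR (S M) * h) + h/2*(p0 0 + p0 (INR (S M) * h))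
  + h^2/12*(p1 (INR (S M)*h) - p1 0) - sum_n (em_remainder h) M.
Proof.
  induction M as [|M IH].
  - rewrite sum_Sn_R, !sum_O. unfold em_remainder.
    replace (INR 1 * h) with (0 + h) by (simpl; ring).
    replace (INR 0 * h) with 0 by (simpl; ring).
    rewrite euler_maclaurin_cell. lra.
  - rewrite sum_Sn_R, (sum_Sn_R (em_remainder h)), Rmult_plus_distr_l, IH.
    replace (INR (S (S M)) * h) with (INR (S M) * h + h) by (rewrite (S_INR (S M)); ring).
    rewrite <- (RInt_Chasles_R p0 0 (INR (S M) * h) (INR (S M) * h + h))
      by apply ex_RInt_p0.
    rewrite euler_maclaurin_cell. unfold em_remainder, Rdiv. nra.
Qed.

Lemma em_remainder_bound h n : 0 < h ->
  Rabs (em_remainder h n) <= h^3 * RInt (fun x => Rabs (p3 x)) (INR n * h) (INR n * h + h).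
Proof.
  intros Hh. unfold em_remainder.
  assert (ExA : forall a b, ex_RInt (fun x => Rabs (p3 x)) a b).
  { intros a b. apply ex_RInt_continuous_all. intros z.
    apply (continuous_comp p3 Rabs); [apply C3|apply continuous_Rabs]. }
  eapply Rle_trans.
  { apply abs_RInt_le; [lra|]. apply ex_RInt_continuous_all. intros z.
    now apply continuous_em_kernel_mul. }
  rewrite <- (RInt_scal (V:=R_CompleteNormedModule) _ _ _ _ (ExA _ _)).
  apply RInt_le; [lra| | |].
  - apply ex_RInt_continuous_all. intros z. apply (continuous_comp _ Rabs).
    + now apply continuous_em_kernel_mul.
    + apply continuous_Rabs.
  - apply (ex_RInt_scal (V:=R_CompleteNormedModule)), ExA.
  - intros x Hx. rewrite Rabs_mult. apply Rmult_le_compat_r; [apply Rabs_pos|].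
    apply em_kernel_bound. lra.
Qed.

Lemma em_remainder_series h I : 0 < h -> is_RInt_pinfty (fun x => Rabs (p3 x)) I ->
  ex_series (em_remainder h) /\ Rabs (Series (em_remainder h)) <= h^3 * I.
Proof.
  intros Hh HI.
  set (c := fun n => RInt (fun x => Rabs (p3 x)) (INR n * h) (INR n * h + h)).
  assert (Hc : is_series c I).
  { change (is_lim_seq (sum_n c) I).
    apply is_lim_seq_ext with (fun M => RInt (fun x => Rabs (p3 x)) 0 (INR (S M) * h)).
    - intros M. symmetry. apply sum_n_RInt_cells. intros a b. apply ex_RInt_continuous_all.
      intros z. apply (continuous_comp p3 Rabs); [apply C3|apply continuous_Rabs].
    - now apply is_RInt_pinfty_seq. }
  assert (Hdom : forall n, Rabs (em_remainder h n) <= h^3 * c n)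
    by (intros n; now apply em_remainder_bound).
  assert (Hsc : ex_series (fun n => h^3 * c n))
    by (apply (ex_series_scal_l (K:=R_AbsRing) (V:=R_NormedModule)); now exists I).
  assert (Habs : ex_series (fun n => Rabs (em_remainder h n))).
  { apply (ex_series_le (K:=R_AbsRing) (V:=R_CompleteNormedModule)) with (fun n => h^3 * c n);
      [|exact Hsc].
    intros n. change (Rabs (Rabs (em_remainder h n)) <= h^3 * c n). now rewrite Rabs_Rabsolu. }
  split; [now apply ex_series_Rabs|].
  eapply Rle_trans; [now apply Series_Rabs|].
  rewrite <- (is_series_unique c I Hc), <- Series_scal_l.
  apply Series_le; [|exact Hsc]. intros n. split; [apply Rabs_pos|apply Hdom].
Qed.

Lemma euler_maclaurin_series h L I : 0 < h ->
  is_RInt_pinfty p0 L -> is_RInt_pinfty (fun x => Rabs (p3 x)) I ->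
  is_lim p0 p_infty 0 -> is_lim p1 p_infty 0 ->
  is_series (fun n => p0 (INR (S n) * h))
    (L / h - p0 0 / 2 - h / 12 * p1 0 - Series (em_remainder h) / h).
Proof.
  intros Hh HL HI L0 L1.
  destruct (em_remainder_series h I Hh HI) as [Hex _].
  assert (Hr := Series_correct _ Hex).
  assert (Hlim : forall p, is_lim p p_infty 0 -> is_lim_seq (fun M => p (INR (S M) * h)) 0).
  { intros p Hp. eapply filterlim_comp; [apply is_lim_seq_mult_INR_S; auto|exact Hp]. }
  change (is_lim_seq (sum_n (fun n => p0 (INR (S n) * h)))
    (L / h - p0 0 / 2 - h / 12 * p1 0 - Series (em_remainder h) / h)).
  apply is_lim_seq_ext with (fun M => / h * (RInt p0 0 (INR (S M) * h)
      + h/2*(p0 0 + p0 (INR (S M) * h)) + h^2/12*(p1 (INR (S M)*h) - p1 0)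
      - sum_n (em_remainder h) M) - p0 0).
  - intros M. rewrite <- euler_maclaurin_partial, (sum_n_shift (fun k => p0 (INR k * h))).
    replace (INR 0 * h) with 0 by (simpl; ring). field. lra.
  - replace (L / h - p0 0 / 2 - h / 12 * p1 0 - Series (em_remainder h) / h)
      with (/ h * (L + h/2*(p0 0 + 0) + h^2/12*(0 - p1 0) - Series (em_remainder h)) - p0 0)
      by (field; lra).
    apply is_lim_seq_minus'; [|apply is_lim_seq_const].
    apply (is_lim_seq_scal_l _ (/ h) (Finite _)).
    apply is_lim_seq_minus'; [|exact Hr].
    apply is_lim_seq_plus'; [apply is_lim_seq_plus'|].
    + now apply is_RInt_pinfty_seq.
    + apply (is_lim_seq_scal_l _ _ (Finite _)).
      apply is_lim_seq_plus'; [apply is_lim_seq_const|now apply Hlim].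
    + apply (is_lim_seq_scal_l _ _ (Finite _)).
      apply is_lim_seq_minus'; [now apply Hlim|apply is_lim_seq_const].
Qed.

End EulerMaclaurin.

Lemma pow_mul_exp_bound k c x : 0 < c -> 0 <= x -> x^k * exp (-(c*x)) <= (INR k / c)^k.
Proof.
  intros Hc Hx. destruct k as [|k].
  - simpl. rewrite Rmult_1_l, <- exp_0. apply exp_le_exp. nra.
  - set (n := INR (S k)).
    assert (Hn : 0 < n) by (apply lt_0_INR; lia).
    set (y := c * x / n).
    assert (Hy : 0 <= y) by (unfold y; apply Rdiv_le_0_compat; nra).
    assert (Hey : y <= exp y) by (generalize (exp_ineq1_le y); lra).
    (* [x^n exp(-c x) = (n/c)^n (y / exp y)^n] with [y = c x / n]. *)
    assert (Ex : x = n / c * y) by (unfold y; field; lra).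
    assert (Ee : exp (c * x) = exp y ^ S k).
    { rewrite <- Rpower_pow by apply exp_pos. unfold Rpower. rewrite ln_exp.
      f_equal. fold n. unfold y. field. lra. }
    rewrite Ex at 1. rewrite Rpow_mult_distr, exp_Ropp, Ee.
    assert (0 < exp y ^ S k) by (apply pow_lt, exp_pos).
    assert (y ^ S k <= exp y ^ S k) by (apply pow_incr; lra).
    assert (0 <= (n / c) ^ S k) by (apply pow_le, Rdiv_le_0_compat; lra).
    apply Rle_trans with ((n / c) ^ S k * exp y ^ S k * / exp y ^ S k).
    + apply Rmult_le_compat_r; [left; now apply Rinv_0_lt_compat|].
      now apply Rmult_le_compat_l.
    + right. field. lra.
Qed.

Lemma bounded_variation_0 (F dF : R -> R) t B :
  (forall x, Rabs x <= Rabs t -> is_derive F x (dF x) /\ Rabs (dF x) <= B) ->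
  Rabs (F t - F 0) <= B * Rabs t.
Proof.
  intros H. rewrite <- (Rminus_0_r t) at 2. apply (bounded_variation F dF).
  intros x. rewrite !Rminus_0_r. apply H.
Qed.

Lemma exp_sub1_bound t : Rabs (exp t - 1) <= Rabs t * exp (Rabs t).
Proof.
  rewrite <- exp_0 at 1. rewrite Rmult_comm. apply (bounded_variation_0 exp exp).
  intros x Hx. split; [apply is_derive_exp|].
  rewrite Rabs_pos_eq by (left; apply exp_pos). apply exp_le_exp. split_Rabs; lra.
Qed.

Lemma exp_taylor1_bound t : Rabs (exp t - 1 - t) <= t^2 * exp (Rabs t).
Proof.
  assert (H := bounded_variation_0 (fun t => exp t - 1 - t) (fun t => exp t - 1) t
                 (Rabs t * exp (Rabs t))).
  cbv beta in H. rewrite exp_0 in H. replace (1 - 1 - 0) with 0 in H by ring.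
  rewrite Rminus_0_r in H.
  replace (t^2) with (Rabs t * Rabs t) by (rewrite <- pow2_abs; ring).
  replace (Rabs t * Rabs t * exp (Rabs t)) with (Rabs t * exp (Rabs t) * Rabs t) by ring.
  apply H. intros x Hx. split; [auto_derive; auto; ring|].
  eapply Rle_trans; [apply exp_sub1_bound|].
  apply Rmult_le_compat; auto using Rabs_pos; [left; apply exp_pos|now apply exp_le_exp].
Qed.

Lemma exp_taylor2_bound t : Rabs (exp t - 1 - t - t^2/2) <= Rabs t ^ 3 * exp (Rabs t).
Proof.
  assert (H := bounded_variation_0 (fun t => exp t - 1 - t - t^2/2) (fun t => exp t - 1 - t) t
                 (t^2 * exp (Rabs t))).
  cbv beta in H. rewrite exp_0 in H. replace (1 - 1 - 0 - 0 ^ 2 / 2) with 0 in H by field.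
  rewrite Rminus_0_r in H.
  replace (Rabs t ^ 3 * exp (Rabs t)) with (t^2 * exp (Rabs t) * Rabs t)
    by (rewrite <- (pow2_abs t); ring).
  apply H. intros x Hx. split; [auto_derive; auto; field|].
  eapply Rle_trans; [apply exp_taylor1_bound|].
  apply Rmult_le_compat; [apply pow2_ge_0|left; apply exp_pos| |now apply exp_le_exp].
  rewrite <- (pow2_abs x), <- (pow2_abs t). apply pow_incr. split; [apply Rabs_pos|exact Hx].
Qed.

Lemma ln_1m_taylor3_bound u :
  Rabs u <= 1/2 -> Rabs (ln (1-u) + u + u^2/2 + u^3/3) <= 2 * u^4.
Proof.
  intros Hu.
  assert (H := bounded_variation_0 (fun x => ln (1-x) + x + x^2/2 + x^3/3)
                 (fun x => - x^3 / (1-x)) u (2 * Rabs u ^ 3)).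
  cbv beta in H. replace (1 - 0) with 1 in H by ring. rewrite ln_1 in H.
  replace (0 + 0 + 0 ^ 2 / 2 + 0 ^ 3 / 3) with 0 in H by field. rewrite Rminus_0_r in H.
  replace (2 * u^4) with (2 * Rabs u ^ 3 * Rabs u)
    by (replace (2 * Rabs u ^ 3 * Rabs u) with (2 * (Rabs u ^ 2)^2) by ring;
        rewrite pow2_abs; ring).
  apply H. intros x Hx. split.
  - auto_derive; [split_Rabs; lra|]. field. split_Rabs; lra.
  - unfold Rdiv. rewrite Rabs_mult, Rabs_Ropp, Rabs_inv, <- RPow_abs.
    assert (Hx1 : 1/2 <= Rabs (1 - x)) by (split_Rabs; lra).
    assert (0 <= Rabs x ^ 3) by (apply pow_le, Rabs_pos).
    assert (Rabs x ^ 3 <= Rabs u ^ 3) by (apply pow_incr; split; [apply Rabs_pos|exact Hx]).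
    assert (/ Rabs (1 - x) <= 2)
      by (replace 2 with (/ (1/2)) by field; apply Rinv_le_contravar; lra).
    assert (0 <= / Rabs (1 - x)) by (left; apply Rinv_0_lt_compat; lra).
    nra.
Qed.

Lemma is_derive_of_quadratic_bound (F : R -> R) x l d K : 0 < d ->
  (forall e, Rabs e <= d -> Rabs (F (x+e) - F x - e * l) <= K * e^2) -> is_derive F x l.
Proof.
  intros Hd HB. apply is_derive_Reals. intros eps Heps.
  set (K' := Rabs K + 1).
  assert (HK' : 0 < K') by (unfold K'; generalize (Rabs_pos K); lra).
  assert (Hd0 : 0 < Rmin d (eps / K')) by (apply Rmin_pos; auto; now apply Rdiv_lt_0_compat).
  exists (mkposreal _ Hd0). intros e He0 He. simpl in He.
  assert (He1 : Rabs e <= d) by (generalize (Rmin_l d (eps/K')); lra).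
  assert (He2 : Rabs e < eps / K') by (generalize (Rmin_r d (eps/K')); lra).
  specialize (HB e He1).
  assert (Hae : 0 < Rabs e) by now apply Rabs_pos_lt.
  replace ((F (x + e) - F x) / e - l) with ((F (x + e) - F x - e * l) / e) by (field; auto).
  unfold Rdiv. rewrite Rabs_mult, Rabs_inv.
  apply Rle_lt_trans with (K' * Rabs e).
  - apply Rmult_le_reg_r with (Rabs e); [exact Hae|].
    rewrite Rmult_assoc, Rinv_l, Rmult_1_r by lra.
    eapply Rle_trans; [exact HB|].
    rewrite <- (pow2_abs e). unfold K'. generalize (Rle_abs K). nra.
  - apply Rmult_lt_reg_l with (/ K'); [now apply Rinv_0_lt_compat|].
    rewrite <- Rmult_assoc, Rinv_l, Rmult_1_l by lra. lra.
Qed.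

(** * Moments of the damped function *)

Lemma locally_gt a b : a < b -> locally b (fun z => a < z).
Proof.
  intros Hb. exists (mkposreal (b - a) ltac:(lra)). intros z Hz.
  apply Rabs_def2 in Hz. unfold minus, plus, opp in Hz. simpl in Hz. lra.
Qed.

Lemma pow_exp_shift_bound x m c a b : 0 <= x -> 0 < c -> a + c <= b ->
  x^m * exp (-(b * x)) <= (INR m / c)^m * exp (-(a * x)).
Proof.
  intros Hx Hc Hb.
  replace (exp (-(b * x))) with (exp (-(c*x)) * exp (-((b-c)*x)))
    by (rewrite <- exp_plus; f_equal; ring).
  rewrite <- Rmult_assoc.
  apply Rmult_le_compat; [| left; apply exp_pos | now apply pow_mul_exp_bound | ].
  - apply Rmult_le_pos; [now apply pow_le | left; apply exp_pos].
  - apply exp_le_exp. nra.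
Qed.

Lemma phi0_shift fd b e x : phi0 fd (b + e) x = exp (- (e * x)) * phi0 fd b x.
Proof.
  unfold phi0. replace (- ((b + e) * x)) with (- (e * x) + - (b * x)) by ring.
  rewrite exp_plus. ring.
Qed.

Lemma Rabs_phi0 fd b x : Rabs (phi0 fd b x) = exp (-(b * x)) * Rabs (fd_ext fd 0 x).
Proof. unfold phi0. rewrite Rabs_mult, Rabs_pos_eq by (left; apply exp_pos). reflexivity. Qed.

Definition moment fd (k : nat) (b : R) : R :=
  RInt_gen (fun x => x^k * phi0 fd b x) (at_point 0) (Rbar_locally p_infty).

Section Moments.

Variable fd : nat -> R -> R.
Hypothesis Hder : forall j, (j < 4)%nat -> deriv_on_nonneg (fd j) (fd (S j)).
Variables a0 J0 : R.
Hypothesis HJ0 : is_RInt_pinfty (fun x => Rabs (phi0 fd a0 x)) J0.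

(* The factor [x^m] is absorbed by the gap [c] between [b] and [a0]. *)
Lemma is_RInt_pinfty_phi0_dominated u K m b c : 0 <= K -> 0 < c -> a0 + c <= b ->
  (forall x, continuous u x) ->
  (forall x, 0 <= x -> Rabs (u x) <= K * (x^m * Rabs (phi0 fd b x))) ->
  exists l, is_RInt_pinfty u l /\ Rabs l <= K * ((INR m / c)^m * J0).
Proof.
  intros HK Hc Hb Hu Hle.
  apply (is_RInt_pinfty_dominated u (fun x => K * ((INR m / c)^m * Rabs (phi0 fd a0 x))));
    [exact Hu| |now apply is_RInt_pinfty_scal, is_RInt_pinfty_scal].
  intros x Hx. eapply Rle_trans; [now apply Hle|].
  apply Rmult_le_compat_l; [exact HK|].
  rewrite !Rabs_phi0, <- !Rmult_assoc.
  apply Rmult_le_compat_r; [apply Rabs_pos|]. now apply pow_exp_shift_bound.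
Qed.

Lemma moment_spec k b c : 0 < c -> a0 + c <= b ->
  is_RInt_pinfty (fun x => x^k * phi0 fd b x) (moment fd k b) /\
  Rabs (moment fd k b) <= (INR k / c)^k * J0.
Proof.
  intros Hc Hb.
  destruct (is_RInt_pinfty_phi0_dominated (fun x => x^k * phi0 fd b x) 1 k b c)
    as [l [Hl Hlb]]; try lra.
  - intros z. apply (ex_derive_continuous (K:=R_AbsRing) (V:=R_NormedModule)).
    auto_derive. apply (ex_derive_phi0 fd Hder).
  - intros x Hx. cbv beta. rewrite Rabs_mult, (Rabs_pos_eq (x^k)) by now apply pow_le. lra.
  - replace (moment fd k b) with l by (symmetry; exact (RInt_gen_pinfty _ _ Hl)).
    split; [exact Hl|lra].
Qed.

Lemma moment_taylor1 k b e c : 0 < c -> a0 + c <= b - Rabs e ->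
  Rabs (moment fd k (b+e) - moment fd k b + e * moment fd (S k) b)
    <= e^2 * ((INR (k+2) / c)^(k+2) * J0).
Proof.
  intros Hc Hb.
  assert (Hae := Rabs_pos e). assert (Hle := Rle_abs e).
  destruct (moment_spec k (b+e) c Hc) as [I1 _]; [split_Rabs; lra|].
  destruct (moment_spec k b c Hc) as [I2 _]; [lra|].
  destruct (moment_spec (S k) b c Hc) as [I3 _]; [lra|].
  pose proof (is_RInt_pinfty_plus _ _ _ _ (is_RInt_pinfty_minus _ _ _ _ I1 I2)
                (is_RInt_pinfty_scal e _ _ I3)) as Iu.
  destruct (is_RInt_pinfty_phi0_dominated
     (fun x => x ^ k * phi0 fd (b + e) x - x ^ k * phi0 fd b x + e * (x ^ S k * phi0 fd b x))
     (e^2) (k+2) (b - Rabs e) c) as [l [Hl Hlb]]; auto using pow2_ge_0.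
  - intros z. apply (ex_derive_continuous (K:=R_AbsRing) (V:=R_NormedModule)).
    auto_derive. repeat split; apply (ex_derive_phi0 fd Hder).
  - intros x Hx.
    replace (b - Rabs e) with (b + - Rabs e) by ring. rewrite phi0_shift, phi0_shift.
    replace (x ^ k * (exp (- (e * x)) * phi0 fd b x) - x ^ k * phi0 fd b x
             + e * (x ^ S k * phi0 fd b x))
      with ((x ^ k * phi0 fd b x) * (exp (- e * x) - 1 - (- e * x)))
      by (replace (- e * x) with (- (e * x)) by ring; simpl; ring).
    rewrite Rabs_mult. eapply Rle_trans.
    { apply Rmult_le_compat_l; [apply Rabs_pos|apply exp_taylor1_bound]. }
    rewrite Rabs_mult, (Rabs_mult (exp _)), (Rabs_pos_eq (exp _)) by (left; apply exp_pos).
    rewrite (Rabs_pos_eq (x ^ k)) by now apply pow_le.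
    replace (Rabs (- e * x)) with (Rabs e * x)
      by (rewrite Rabs_mult, Rabs_Ropp, (Rabs_pos_eq x); auto).
    replace (- (- Rabs e * x)) with (Rabs e * x) by ring.
    rewrite pow_add. replace ((- e * x) ^ 2) with (e^2 * x^2) by ring. right; ring.
  - rewrite <- (is_RInt_pinfty_unique _ _ _ Hl Iu). exact Hlb.
Qed.

Lemma moment_taylor2 b e c : 0 < c -> a0 + c <= b - Rabs e ->
  Rabs (moment fd 0 (b+e) - moment fd 0 b + e * moment fd 1 b - e^2/2 * moment fd 2 b)
    <= Rabs e^3 * ((INR 3 / c)^3 * J0).
Proof.
  intros Hc Hb.
  assert (Hae := Rabs_pos e). assert (Hle := Rle_abs e).
  destruct (moment_spec 0 (b+e) c Hc) as [I1 _]; [split_Rabs; lra|].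
  destruct (moment_spec 0 b c Hc) as [I2 _]; [lra|].
  destruct (moment_spec 1 b c Hc) as [I3 _]; [lra|].
  destruct (moment_spec 2 b c Hc) as [I4 _]; [lra|].
  pose proof (is_RInt_pinfty_minus _ _ _ _
    (is_RInt_pinfty_plus _ _ _ _ (is_RInt_pinfty_minus _ _ _ _ I1 I2)
       (is_RInt_pinfty_scal e _ _ I3)) (is_RInt_pinfty_scal (e^2/2) _ _ I4)) as Iu.
  destruct (is_RInt_pinfty_phi0_dominated
     (fun x => x ^ 0 * phi0 fd (b + e) x - x ^ 0 * phi0 fd b x + e * (x ^ 1 * phi0 fd b x)
               - e^2/2 * (x^2 * phi0 fd b x))
     (Rabs e^3) 3 (b - Rabs e) c) as [l [Hl Hlb]]; auto using pow_le.
  - intros z. apply (ex_derive_continuous (K:=R_AbsRing) (V:=R_NormedModule)).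
    auto_derive. repeat split; apply (ex_derive_phi0 fd Hder).
  - intros x Hx.
    replace (b - Rabs e) with (b + - Rabs e) by ring. rewrite phi0_shift, phi0_shift.
    replace (x ^ 0 * (exp (- (e * x)) * phi0 fd b x) - x ^ 0 * phi0 fd b x
             + e * (x ^ 1 * phi0 fd b x) - e ^ 2 / 2 * (x ^ 2 * phi0 fd b x))
      with (phi0 fd b x * (exp (- e * x) - 1 - (- e * x) - (- e * x)^2/2))
      by (replace (- e * x) with (- (e * x)) by ring; field).
    rewrite Rabs_mult. eapply Rle_trans.
    { apply Rmult_le_compat_l; [apply Rabs_pos|apply exp_taylor2_bound]. }
    rewrite (Rabs_mult (exp _)), (Rabs_pos_eq (exp _)) by (left; apply exp_pos).
    replace (Rabs (- e * x)) with (Rabs e * x)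
      by (rewrite Rabs_mult, Rabs_Ropp, (Rabs_pos_eq x); auto).
    replace (- (- Rabs e * x)) with (Rabs e * x) by ring.
    right; ring.
  - rewrite <- (is_RInt_pinfty_unique _ _ _ Hl Iu). exact Hlb.
Qed.

Lemma is_derive_moment k b : a0 < b -> is_derive (moment fd k) b (- moment fd (S k) b).
Proof.
  intros Hb.
  apply is_derive_of_quadratic_bound with ((b - a0)/2) ((INR (k+2) / ((b-a0)/2))^(k+2) * J0);
    [lra|].
  intros e He.
  replace (moment fd k (b + e) - moment fd k b - e * - moment fd (S k) b)
    with (moment fd k (b + e) - moment fd k b + e * moment fd (S k) b) by ring.
  eapply Rle_trans; [apply (moment_taylor1 k b e ((b - a0)/2)); lra|right; ring].
Qed.

Variable f : R -> R.
Hypothesis Hfd0 : forall x, 0 <= x -> fd 0%nat x = f x.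

Lemma Lap_moment0 b : a0 < b -> Lap f b = moment fd 0 b.
Proof.
  intros Hb. destruct (moment_spec 0 b (b - a0)) as [HI _]; try lra.
  unfold Lap. apply RInt_gen_pinfty.
  apply is_RInt_pinfty_ext with (fun x => x ^ 0 * phi0 fd b x); [|exact HI].
  intros x Hx. unfold phi0. rewrite fd_ext_nonneg, Hfd0 by lra. simpl. ring.
Qed.

Lemma Derive_Lap b : a0 < b -> Derive (Lap f) b = - moment fd 1 b.
Proof.
  intros Hb.
  rewrite (Derive_ext_loc (Lap f) (moment fd 0)).
  - now apply is_derive_unique, is_derive_moment.
  - eapply filter_imp; [|now apply (locally_gt a0)]. intros z Hz. now apply Lap_moment0.
Qed.

Lemma Derive_n2_Lap b : a0 < b -> Derive_n (Lap f) 2 b = moment fd 2 b.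
Proof.
  intros Hb.
  change (Derive (fun z => Derive (Lap f) z) b = moment fd 2 b).
  rewrite (Derive_ext_loc (fun z => Derive (Lap f) z) (fun z => - moment fd 1 z)).
  - apply is_derive_unique.
    replace (moment fd 2 b) with (- - moment fd 2 b) by ring.
    apply (is_derive_opp (K:=R_AbsRing) (V:=R_NormedModule)). now apply is_derive_moment.
  - eapply filter_imp; [|now apply (locally_gt a0)]. intros z Hz. now apply Derive_Lap.
Qed.

End Moments.

(** * The effective damping rate *)

(* [rho^n = exp (- damping_rate g h * (n h))] for [rho = 1 - g h]. *)
Definition damping_rate (g h : R) : R := - ln (1 - g * h) / h.

Lemma damping_rate_expansion g h B : 0 < h -> Rabs g <= B -> h * B <= 1/2 ->
  Rabs (damping_rate g h - g - g^2*h/2 - g^3*h^2/3) <= 2 * B^4 * h^3.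
Proof.
  intros Hh Hg HhB.
  assert (HB : 0 <= B) by (generalize (Rabs_pos g); lra).
  assert (Hu : Rabs (g * h) <= 1/2)
    by (rewrite Rabs_mult, (Rabs_pos_eq h) by lra; nra).
  replace (damping_rate g h - g - g^2*h/2 - g^3*h^2/3)
    with (- (ln (1 - g*h) + g*h + (g*h)^2/2 + (g*h)^3/3) / h)
    by (unfold damping_rate; field; lra).
  unfold Rdiv. rewrite Rabs_mult, Rabs_Ropp, Rabs_inv, (Rabs_pos_eq h) by lra.
  apply Rle_trans with (2 * (g*h)^4 * / h).
  - apply Rmult_le_compat_r; [left; now apply Rinv_0_lt_compat|now apply ln_1m_taylor3_bound].
  - replace (2 * (g*h)^4 * / h) with (2 * (g^2)^2 * h^3) by (field; lra).
    apply Rmult_le_compat_r; [apply pow_le; lra|].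
    replace (B^4) with ((B^2)^2) by ring.
    apply Rmult_le_compat_l; [lra|]. apply pow_incr.
    split; [apply pow2_ge_0|]. rewrite <- (pow2_abs g). apply pow_incr. split; [apply Rabs_pos|lra].
Qed.

Definition rate_shift_const (B : R) : R := B^2/2 + B^3/3 + 2 * B^4.

Lemma damping_rate_shift g h B : 0 < h <= 1 -> Rabs g <= B -> h * B <= 1/2 ->
  Rabs (damping_rate g h - g) <= rate_shift_const B * h.
Proof.
  intros Hh Hg HhB.
  assert (HB : 0 <= B) by (generalize (Rabs_pos g); lra).
  assert (Hg2 : Rabs (g^2) <= B^2) by (rewrite <- RPow_abs; apply pow_incr; split; auto using Rabs_pos).
  assert (Hg3 : Rabs (g^3) <= B^3) by (rewrite <- RPow_abs; apply pow_incr; split; auto using Rabs_pos).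
  assert (Hh2 : 0 <= h^2 <= h) by (split; [apply pow2_ge_0|simpl; nra]).
  assert (Hh3 : 0 <= h^3 <= h) by (split; [apply pow_le; lra|simpl; nra]).
  assert (HB4 : 0 <= B^4) by (apply pow_le; lra).
  assert (E := damping_rate_expansion g h B (proj1 Hh) Hg HhB).
  assert (E2 : Rabs (g^2*h/2) <= B^2/2 * h).
  { unfold Rdiv. rewrite !Rabs_mult, (Rabs_pos_eq h), (Rabs_pos_eq (/2)) by lra. nra. }
  assert (E3 : Rabs (g^3*h^2/3) <= B^3/3 * h).
  { unfold Rdiv. rewrite !Rabs_mult, (Rabs_pos_eq (h^2)), (Rabs_pos_eq (/3)) by lra.
    assert (0 <= Rabs (g^3)) by apply Rabs_pos. nra. }
  unfold rate_shift_const.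
  replace (damping_rate g h - g)
    with ((damping_rate g h - g - g^2*h/2 - g^3*h^2/3) + g^2*h/2 + g^3*h^2/3) by ring.
  eapply Rle_trans; [apply Rabs_triang|].
  eapply Rle_trans; [apply Rplus_le_compat_r, Rabs_triang|]. nra.
Qed.

Lemma Fterm_phi0 f fd s g n : (forall x, 0 <= x -> fd 0%nat x = f x) -> 0 < s ->
  0 < 1 - g / sqrt s ->
  Fterm f s (1 - g / sqrt s) n =
  phi0 fd (damping_rate g (/ sqrt s)) (INR (S n) * / sqrt s).
Proof.
  intros Hf Hs Hr. unfold Fterm, phi0, damping_rate.
  assert (Hq : 0 < sqrt s) by now apply sqrt_lt_R0.
  assert (Hn : 0 <= INR (S n) * / sqrt s)
    by (apply Rmult_le_pos; [apply pos_INR|left; now apply Rinv_0_lt_compat]).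
  rewrite fd_ext_nonneg, Hf by exact Hn.
  unfold Rdiv at 1. rewrite Rmult_comm. f_equal.
  rewrite <- Rpower_pow by exact Hr. unfold Rpower. f_equal.
  replace (g * / sqrt s) with (g / sqrt s) by reflexivity. field. lra.
Qed.

(** * The uniform expansion *)

Lemma Rabs_pow_mul_le b B k y : Rabs b <= B -> Rabs (b^k * y) <= B^k * Rabs y.
Proof.
  intros Hb. rewrite Rabs_mult, <- RPow_abs.
  apply Rmult_le_compat_r; [apply Rabs_pos|]. apply pow_incr. split; [apply Rabs_pos|exact Hb].
Qed.

(* With [L(g+d) = L0 - d L1 + d^2/2 L2 + T] and [sqrt s = /h], the scaled error is [h]
   times a combination of quantities that stay bounded as [h -> 0]. *)
Lemma expansion_identity h g d L0 L1 L2 T Rm f1 : h <> 0 ->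
  / h * (((T + L0 - d*L1 + d^2/2*L2)/h - 1/2 - h/12*(f1 - (g+d)) - Rm/h)
         - (/h * L0 + (/2 * g^2 * (-L1) - /2)))
  - (/3 * g^3 * (-L1) + /8 * g^4 * L2 + /12 * (g - f1))
  = h * (T/h^3 - (d - g^2*h/2 - g^3*h^2/3)/h^3 * L1
         + L2/2 * (g^3/3 + (d - g^2*h/2 - g^3*h^2/3)/h^3 * h) * (d/h + g^2/2)
         + (d/h)/12 - Rm/h^3).
Proof. intros Hh. field. exact Hh. Qed.

Lemma Rabs_div_pow_le z C h k : 0 < h -> Rabs z <= C * h^k -> Rabs (z / h^k) <= C.
Proof.
  intros Hh Hz. assert (Hk : 0 < h^k) by now apply pow_lt.
  unfold Rdiv. rewrite Rabs_mult, Rabs_inv, (Rabs_pos_eq (h^k)) by lra.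
  apply Rle_trans with (C * h^k * / h^k); [|right; field; lra].
  apply Rmult_le_compat_r; [left; now apply Rinv_0_lt_compat|exact Hz].
Qed.

Lemma Rabs_triang5 a b c d e :
  Rabs (a - b + c + d - e) <= Rabs a + Rabs b + Rabs c + Rabs d + Rabs e.
Proof. split_Rabs; lra. Qed.

Lemma expansion_remainder_bound h g X Y T Rm L1 L2 B CX CY CT CR L1m L2m :
  0 < h <= 1 -> Rabs g <= B -> Rabs X <= CX -> Rabs Y <= CY -> Rabs T <= CT ->
  Rabs Rm <= CR -> Rabs L1 <= L1m -> Rabs L2 <= L2m ->
  Rabs (T - Y * L1 + L2/2 * (g^3/3 + Y * h) * (X + g^2/2) + X/12 - Rm)
   <= CT + CY * L1m + L2m/2 * (B^3/3 + CY) * (CX + B^2/2) + CX/12 + CR.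
Proof.
  intros Hh Hg HX HY HT HR HL1 HL2.
  assert (HB : 0 <= B) by (generalize (Rabs_pos g); lra).
  assert (E1 : Rabs (Y * L1) <= CY * L1m)
    by (rewrite Rabs_mult; apply Rmult_le_compat; auto using Rabs_pos).
  assert (Eg3 : Rabs (g^3/3) <= B^3/3).
  { unfold Rdiv. rewrite Rabs_mult, <- RPow_abs, (Rabs_pos_eq (/3)) by lra.
    apply Rmult_le_compat_r; [lra|]. apply pow_incr. split; [apply Rabs_pos|exact Hg]. }
  assert (Eg2 : Rabs (g^2/2) <= B^2/2).
  { unfold Rdiv. rewrite Rabs_mult, <- RPow_abs, (Rabs_pos_eq (/2)) by lra.
    apply Rmult_le_compat_r; [lra|]. apply pow_incr. split; [apply Rabs_pos|exact Hg]. }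
  assert (EYh : Rabs (Y * h) <= CY).
  { rewrite Rabs_mult, (Rabs_pos_eq h) by lra. assert (0 <= Rabs Y) by apply Rabs_pos. nra. }
  assert (E2 : Rabs (L2/2 * (g^3/3 + Y * h) * (X + g^2/2))
               <= L2m/2 * (B^3/3 + CY) * (CX + B^2/2)).
  { rewrite !Rabs_mult.
    assert (Rabs (L2/2) <= L2m/2) by (unfold Rdiv; rewrite Rabs_mult, (Rabs_pos_eq (/2)); lra).
    assert (Rabs (g^3/3 + Y * h) <= B^3/3 + CY) by (eapply Rle_trans; [apply Rabs_triang|lra]).
    assert (Rabs (X + g^2/2) <= CX + B^2/2) by (eapply Rle_trans; [apply Rabs_triang|lra]).
    apply Rmult_le_compat; auto using Rabs_pos.
    - apply Rmult_le_pos; apply Rabs_pos.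
    - apply Rmult_le_compat; auto using Rabs_pos. }
  assert (E3 : Rabs (X/12) <= CX/12)
    by (unfold Rdiv; rewrite Rabs_mult, (Rabs_pos_eq (/12)); lra).
  eapply Rle_trans; [apply Rabs_triang5|lra].
Qed.

Section Expansion.

Variables (f : R -> R) (fd : nat -> R -> R).
Hypothesis Hf0 : f 0 = 1.
Hypothesis Hfd0 : forall x, 0 <= x -> fd 0%nat x = f x.
Hypothesis Hder : forall j, (j < 4)%nat -> deriv_on_nonneg (fd j) (fd (S j)).
Variables (a0 : R) (J : nat -> R).
Hypothesis HJ : forall j, (j < 4)%nat ->
  is_RInt_pinfty (fun x => Rabs (exp (-(a0 * x)) * fd_ext fd j x)) (J j).
Hypothesis Hlim : forall b, a0 < b -> forall j, (j <= 1)%nat ->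
  is_lim (fun x => exp (- (b * x)) * fd j x) p_infty 0.

Definition phi3_bound (B : R) : R := J 3%nat + 3*B * J 2%nat + 3*B^2 * J 1%nat + B^3 * J 0%nat.

Lemma phi3_integral_bound b B : a0 <= b -> Rabs b <= B ->
  exists I, is_RInt_pinfty (fun x => Rabs (phi3 fd b x)) I /\ I <= phi3_bound B.
Proof.
  intros Hb HB.
  assert (HB0 : 0 <= B) by (generalize (Rabs_pos b); lra).
  set (w j x := Rabs (exp (-(a0 * x)) * fd_ext fd j x)).
  assert (Hw : forall x, 0 <= x -> Rabs (phi3 fd b x) <=
            w 3%nat x + 3*B * w 2%nat x + 3*B^2 * w 1%nat x + B^3 * w 0%nat x).
  { intros x Hx. unfold phi3, w. rewrite !Rabs_mult, !(Rabs_pos_eq (exp _)) by (left; apply exp_pos).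
    set (e0 := fd_ext fd 0 x). set (e1 := fd_ext fd 1 x).
    set (e2 := fd_ext fd 2 x). set (e3 := fd_ext fd 3 x).
    assert (Hexp : exp (-(b*x)) <= exp (-(a0*x))) by (apply exp_le_exp; nra).
    assert (H1 := Rabs_pow_mul_le b B 1 e2 HB). assert (H2 := Rabs_pow_mul_le b B 2 e1 HB).
    assert (H3 := Rabs_pow_mul_le b B 3 e0 HB). rewrite pow_1 in H1.
    assert (Hs : Rabs (e3 - 3*b * e2 + 3*b^2 * e1 - b^3 * e0)
                 <= Rabs e3 + 3*B * Rabs e2 + 3*B^2 * Rabs e1 + B^3 * Rabs e0).
    { replace (e3 - 3*b * e2 + 3*b^2 * e1 - b^3 * e0)
        with (e3 - 3 * (b * e2) + 3 * (b^2 * e1) - b^3 * e0) by ring.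
      assert (Rabs (e3 - 3 * (b * e2) + 3 * (b^2 * e1) - b^3 * e0)
              <= Rabs e3 + 3 * Rabs (b * e2) + 3 * Rabs (b^2 * e1) + Rabs (b^3 * e0))
        by (split_Rabs; lra).
      lra. }
    assert (0 <= Rabs (e3 - 3*b * e2 + 3*b^2 * e1 - b^3 * e0)) by apply Rabs_pos.
    apply Rle_trans with (exp (-(a0*x)) * (Rabs e3 + 3*B * Rabs e2 + 3*B^2 * Rabs e1 + B^3 * Rabs e0)).
    - apply Rmult_le_compat; auto; left; apply exp_pos.
    - right. ring. }
  assert (Hv := is_RInt_pinfty_plus _ _ _ _
    (is_RInt_pinfty_plus _ _ _ _
       (is_RInt_pinfty_plus _ _ _ _ (HJ 3 ltac:(lia)) (is_RInt_pinfty_scal (3*B) _ _ (HJ 2 ltac:(lia))))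
       (is_RInt_pinfty_scal (3*B^2) _ _ (HJ 1 ltac:(lia))))
    (is_RInt_pinfty_scal (B^3) _ _ (HJ 0 ltac:(lia)))).
  assert (Hc : forall x, continuous (fun x => Rabs (phi3 fd b x)) x).
  { intros x. apply (continuous_comp _ Rabs); [now apply continuous_phi3|apply continuous_Rabs]. }
  destruct (is_RInt_pinfty_dominated (fun x => Rabs (phi3 fd b x))
    (fun x => w 3%nat x + 3*B * w 2%nat x + 3*B^2 * w 1%nat x + B^3 * w 0%nat x) (phi3_bound B) Hc)
    as [I [HI HIb]]; [intros x Hx; rewrite Rabs_Rabsolu; exact (Hw x Hx)|exact Hv|].
  exists I. split; [exact HI|]. generalize (Rle_abs I). lra.
Qed.

Lemma phi01_lim b : a0 < b ->
  is_lim (phi0 fd b) p_infty 0 /\ is_lim (phi1 fd b) p_infty 0.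
Proof.
  intros Hb.
  assert (L0 := Hlim b Hb 0 ltac:(lia)). assert (L1 := Hlim b Hb 1 ltac:(lia)).
  assert (E : forall j, (j <= 1)%nat -> forall x, 0 < x ->
            exp (- (b * x)) * fd j x = exp (- (b * x)) * fd_ext fd j x)
    by (intros j Hj x Hx; rewrite fd_ext_nonneg by lra; reflexivity).
  split.
  - apply is_lim_ext_loc with (fun x => exp (- (b * x)) * fd 0%nat x); [|exact L0].
    exists 0. intros x Hx. unfold phi0. apply E; [lia|lra].
  - apply is_lim_ext_loc
      with (fun x => exp (- (b * x)) * fd 1%nat x - b * (exp (- (b * x)) * fd 0%nat x)).
    + exists 0. intros x Hx. unfold phi1. rewrite !E by (lia || lra). ring.
    + assert (HL := is_lim_scal_l _ b _ _ L0). simpl in HL. rewrite Rmult_0_r in HL.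
      assert (HM := is_lim_minus' _ _ _ _ _ L1 HL). rewrite Rminus_0_r in HM. exact HM.
Qed.

Lemma Fterm_is_series s g h beta B : 0 < s -> h = / sqrt s -> beta = damping_rate g h ->
  0 < 1 - g * h -> a0 < beta -> Rabs beta <= B ->
  exists Rm, Rabs Rm <= h^3 * phi3_bound B /\
    is_series (Fterm f s (1 - g / sqrt s))
      (moment fd 0 beta / h - 1/2 - h/12 * (fd 1%nat 0 - beta) - Rm / h).
Proof.
  intros Hs Hh Hbeta Hr Hb HB.
  assert (Hhp : 0 < h) by (rewrite Hh; now apply Rinv_0_lt_compat, sqrt_lt_R0).
  destruct (moment_spec fd Hder a0 (J 0%nat) (HJ 0 ltac:(lia)) 0 beta (beta - a0)) as [Ip0 _];
    [lra|lra|].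
  assert (Ip0' : is_RInt_pinfty (phi0 fd beta) (moment fd 0 beta))
    by (apply is_RInt_pinfty_ext with (2 := Ip0); intros; simpl; ring).
  destruct (phi3_integral_bound beta B ltac:(lra) HB) as [I3 [HI3 HI3b]].
  destruct (phi01_lim beta Hb) as [Lm0 Lm1].
  assert (Hser := euler_maclaurin_series _ _ _ _ (is_derive_phi0 fd Hder beta)
    (is_derive_phi1 fd Hder beta) (is_derive_phi2 fd Hder beta) (continuous_phi3 fd Hder beta)
    h _ _ Hhp Ip0' HI3 Lm0 Lm1).
  destruct (em_remainder_series (phi3 fd beta) (continuous_phi3 fd Hder beta) h I3 Hhp HI3)
    as [_ HRm].
  exists (Series (em_remainder (phi3 fd beta) h)). split.
  { eapply Rle_trans; [exact HRm|]. apply Rmult_le_compat_l; [apply pow_le; lra|exact HI3b]. }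
  assert (Hp00 : phi0 fd beta 0 = 1).
  { unfold phi0. rewrite fd_ext_nonneg, Hfd0, Hf0 by lra. rewrite Rmult_0_r, Ropp_0, exp_0. ring. }
  assert (Hp10 : phi1 fd beta 0 = fd 1%nat 0 - beta).
  { unfold phi1. rewrite !fd_ext_nonneg, Hfd0, Hf0 by lra. rewrite Rmult_0_r, Ropp_0, exp_0. ring. }
  rewrite Hp00, Hp10 in Hser.
  eapply is_series_ext; [|exact Hser].
  intros n. rewrite (Fterm_phi0 f fd s g n Hfd0 Hs) by (unfold Rdiv; rewrite <- Hh; lra).
  now rewrite Hbeta, Hh.
Qed.

Definition moment_bound (k : nat) (c : R) : R := (INR k / c)^k * J 0%nat.

Definition N_bound (c B : R) : R :=
  B^3/3 * moment_bound 1 c + B^4/8 * moment_bound 2 c + (B + Rabs (fd 1%nat 0))/12.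

Lemma Nfun_bound g c B : 0 < c -> a0 + c <= g -> Rabs g <= B ->
  Rabs (Nfun f (fd 1%nat 0) g) <= N_bound c B.
Proof.
  intros Hc Hg HB.
  assert (HJ0 := HJ 0 ltac:(lia)).
  unfold Nfun. rewrite (Derive_Lap fd Hder a0 _ HJ0 f Hfd0 g),
    (Derive_n2_Lap fd Hder a0 _ HJ0 f Hfd0 g) by lra.
  destruct (moment_spec fd Hder a0 _ HJ0 1 g c Hc Hg) as [_ Hl1].
  destruct (moment_spec fd Hder a0 _ HJ0 2 g c Hc Hg) as [_ Hl2].
  assert (E1 : Rabs (/3 * g^3 * - moment fd 1 g) <= B^3/3 * moment_bound 1 c).
  { replace (/3 * g^3 * - moment fd 1 g) with (g^3 * (- moment fd 1 g / 3)) by field.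
    eapply Rle_trans; [apply Rabs_pow_mul_le, HB|].
    unfold Rdiv at 1. rewrite Rabs_mult, Rabs_Ropp, (Rabs_pos_eq (/3)) by lra.
    unfold moment_bound. apply Rle_trans with (B^3 * ((INR 1 / c)^1 * J 0%nat / 3)); [|right; field; lra].
    apply Rmult_le_compat_l; [apply pow_le; generalize (Rabs_pos g); lra|lra]. }
  assert (E2 : Rabs (/8 * g^4 * moment fd 2 g) <= B^4/8 * moment_bound 2 c).
  { replace (/8 * g^4 * moment fd 2 g) with (g^4 * (moment fd 2 g / 8)) by field.
    eapply Rle_trans; [apply Rabs_pow_mul_le, HB|].
    unfold Rdiv at 1. rewrite Rabs_mult, (Rabs_pos_eq (/8)) by lra.
    unfold moment_bound. apply Rle_trans with (B^4 * ((INR 2 / c)^2 * J 0%nat / 8)); [|right; field; lra].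
    apply Rmult_le_compat_l; [apply pow_le; generalize (Rabs_pos g); lra|lra]. }
  assert (E3 : Rabs (/12 * (g - fd 1%nat 0)) <= (B + Rabs (fd 1%nat 0))/12).
  { rewrite Rabs_mult, (Rabs_pos_eq (/12)) by lra.
    assert (Rabs (g - fd 1%nat 0) <= B + Rabs (fd 1%nat 0))
      by (eapply Rle_trans; [apply Rabs_triang|rewrite Rabs_Ropp; lra]).
    lra. }
  unfold N_bound. eapply Rle_trans; [apply Rabs_triang|].
  eapply Rle_trans; [apply Rplus_le_compat_r, Rabs_triang|]. lra.
Qed.

Lemma moment_taylor2_scaled g d c h B : 0 < c -> 0 < h -> a0 + c <= g - Rabs d ->
  Rabs d <= rate_shift_const B * h ->
  Rabs ((moment fd 0 (g + d) - moment fd 0 g + d * moment fd 1 g - d^2/2 * moment fd 2 g)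
        / h^3) <= rate_shift_const B ^ 3 * moment_bound 3 c.
Proof.
  intros Hc Hh Hg Hd.
  assert (HJ0 := HJ 0 ltac:(lia)).
  apply Rabs_div_pow_le; [exact Hh|].
  eapply Rle_trans; [exact (moment_taylor2 fd Hder a0 _ HJ0 g d c Hc Hg)|].
  replace (rate_shift_const B ^ 3 * moment_bound 3 c * h ^ 3)
    with ((rate_shift_const B * h) ^ 3 * ((INR 3 / c)^3 * J 0%nat))
    by (unfold moment_bound; ring).
  apply Rmult_le_compat_r.
  - apply Rmult_le_pos; [apply pow_le, Rdiv_le_0_compat; [apply pos_INR|lra]|].
    apply (is_RInt_pinfty_ge0 _ _ HJ0). intros; apply Rabs_pos.
  - apply pow_incr. split; [apply Rabs_pos|exact Hd].
Qed.

Definition expansion_error_const (c B : R) : R :=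
  rate_shift_const B ^ 3 * moment_bound 3 c + 2 * B^4 * moment_bound 1 c
  + moment_bound 2 c / 2 * (B^3/3 + 2 * B^4) * (rate_shift_const B + B^2/2)
  + rate_shift_const B / 12 + phi3_bound B.

Lemma scaled_error_pointwise s g c B :
  0 < s -> 0 < c -> a0 + 4 * c <= g -> Rabs g + 1 <= B ->
  / sqrt s <= 1 -> / sqrt s * B <= 1/2 -> rate_shift_const B * / sqrt s <= Rmin c 1 ->
  ex_series (Fterm f s (1 - g / sqrt s)) /\
  Rabs (sqrt s * (Series (Fterm f s (1 - g / sqrt s)) - (sqrt s * Lap f g + Mfun f g))
        - Nfun f (fd 1%nat 0) g) <= / sqrt s * expansion_error_const c B.
Proof.
  intros Hs Hc Hga HgB Hh1 HhB HhC.
  assert (Hsq : sqrt s = / / sqrt s) by (rewrite Rinv_inv; reflexivity).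
  set (h := / sqrt s) in *.
  assert (Hh : 0 < h) by now apply Rinv_0_lt_compat, sqrt_lt_R0.
  assert (HJ0 := HJ 0 ltac:(lia)).
  assert (Hg : Rabs g <= B) by lra.
  assert (Hd := damping_rate_shift g h B (conj Hh Hh1) Hg ltac:(lra)).
  assert (Heta := damping_rate_expansion g h B Hh Hg ltac:(lra)).
  set (d := damping_rate g h - g) in *.
  assert (Hdc : Rabs d <= c) by (generalize (Rmin_l c 1); lra).
  assert (Hd1 : Rabs d <= 1) by (generalize (Rmin_r c 1); lra).
  assert (Hgh : Rabs (g * h) <= 1/2) by (rewrite Rabs_mult, (Rabs_pos_eq h) by lra; nra).
  destruct (Fterm_is_series s g h (g + d) B Hs eq_refl ltac:(unfold d; ring))
    as [Rm [HRm Hser]]; [split_Rabs; lra|split_Rabs; lra|split_Rabs; lra|].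
  split; [eexists; exact Hser|].
  rewrite (is_series_unique _ _ Hser).
  unfold Mfun, Nfun.
  rewrite (Lap_moment0 fd Hder a0 _ HJ0 f Hfd0 g), (Derive_Lap fd Hder a0 _ HJ0 f Hfd0 g),
    (Derive_n2_Lap fd Hder a0 _ HJ0 f Hfd0 g) by lra.
  assert (HT := moment_taylor2_scaled g d c h B Hc Hh ltac:(split_Rabs; lra) Hd).
  set (T := moment fd 0 (g + d) - moment fd 0 g + d * moment fd 1 g
            - d^2/2 * moment fd 2 g) in HT.
  replace (moment fd 0 (g + d))
    with (T + moment fd 0 g - d * moment fd 1 g + d^2/2 * moment fd 2 g) by (unfold T; ring).
  rewrite Hsq, expansion_identity by lra.
  rewrite Rabs_mult, (Rabs_pos_eq h) by lra.
  apply Rmult_le_compat_l; [lra|].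
  destruct (moment_spec fd Hder a0 _ HJ0 1 g c Hc ltac:(lra)) as [_ Hl1].
  destruct (moment_spec fd Hder a0 _ HJ0 2 g c Hc ltac:(lra)) as [_ Hl2].
  apply expansion_remainder_bound with (B := B); auto.
  - rewrite <- (pow_1 h). apply Rabs_div_pow_le; [exact Hh|now rewrite pow_1].
  - apply Rabs_div_pow_le; [exact Hh|]. replace (d - g^2*h/2 - g^3*h^2/3)
      with (damping_rate g h - g - g^2*h/2 - g^3*h^2/3) by (unfold d; ring). exact Heta.
  - apply Rabs_div_pow_le; [exact Hh|]. rewrite Rmult_comm. exact HRm.
Qed.

End Expansion.

Lemma Rbar_lt_exists_between (m : Rbar) (g : R) :
  Rbar_lt m g -> exists a : R, Rbar_lt m a /\ a < g.
Proof.
  destruct m as [m| |]; intros H; simpl in H.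
  - exists ((m+g)/2). simpl. lra.
  - contradiction.
  - exists (g - 1). simpl. split; [exact I|lra].
Qed.

Lemma is_RInt_pinfty_abs_damped fd a0 j :
  (forall j, (j < 4)%nat -> deriv_on_nonneg (fd j) (fd (S j))) -> (j < 4)%nat ->
  ex_RInt_gen (fun x => Rabs (exp (- (a0 * x)) * fd j x)) (at_point 0) (Rbar_locally p_infty) ->
  exists J, is_RInt_pinfty (fun x => Rabs (exp (- (a0 * x)) * fd_ext fd j x)) J.
Proof.
  intros Hder Hj Hg.
  assert (Hc : forall x, continuous (fun x => Rabs (exp (- (a0 * x)) * fd_ext fd j x)) x).
  { intros x. apply (continuous_comp _ Rabs); [|apply continuous_Rabs].
    apply (ex_derive_continuous (K:=R_AbsRing) (V:=R_NormedModule)). auto_derive.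
    eexists. now apply is_derive_fd_ext. }
  eexists. apply is_RInt_pinfty_ext with (fun x => Rabs (exp (- (a0 * x)) * fd j x)).
  - intros x Hx. now rewrite fd_ext_nonneg by lra.
  - apply ex_RInt_gen_pinfty; [|exact Hg].
    intros b Hb. apply ex_RInt_ext with (fun x => Rabs (exp (- (a0 * x)) * fd_ext fd j x)).
    + intros x Hx. rewrite Rmin_left in Hx by lra. now rewrite fd_ext_nonneg by lra.
    + now apply ex_RInt_continuous_all.
Qed.

Lemma damped_integrability (f : R -> R) (fd : nat -> R -> R) (a : R)
  (Hder : forall j, (j < 4)%nat -> deriv_on_nonneg (fd j) (fd (S j)))
  (HL1 : forall g : R, Rbar_lt (gamma_min f) g -> forall j, (j <= 4)%nat ->
     ex_RInt_gen (fun x => Rabs (exp (- (g * x)) * fd j x))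
       (at_point 0) (Rbar_locally p_infty))
  (Hlim : forall g : R, Rbar_lt (gamma_min f) g -> forall j, (j <= 4)%nat ->
     is_lim (fun x => exp (- (g * x)) * fd j x) p_infty 0) :
  Rbar_lt (gamma_min f) a ->
  exists a0 (J : nat -> R), a0 < a /\
    (forall j, (j < 4)%nat ->
       is_RInt_pinfty (fun x => Rabs (exp (- (a0 * x)) * fd_ext fd j x)) (J j)) /\
    (forall b, a0 < b -> forall j, (j <= 1)%nat ->
       is_lim (fun x => exp (- (b * x)) * fd j x) p_infty 0).
Proof.
  intros Ha.
  destruct (Rbar_lt_exists_between _ a Ha) as [a0 [Ha0 Ha0a]].
  assert (HJ : forall j, (j < 4)%nat -> exists J,
     is_RInt_pinfty (fun x => Rabs (exp (- (a0 * x)) * fd_ext fd j x)) J)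
    by (intros j Hj; apply is_RInt_pinfty_abs_damped; auto; apply HL1; auto; lia).
  destruct (HJ 0%nat) as [J0 H0]; [lia|]. destruct (HJ 1%nat) as [J1 H1]; [lia|].
  destruct (HJ 2%nat) as [J2 H2]; [lia|]. destruct (HJ 3%nat) as [J3 H3]; [lia|].
  exists a0, (fun j => match j with 0 => J0 | 1 => J1 | 2 => J2 | _ => J3 end)%nat.
  split; [exact Ha0a|split].
  - intros j Hj. destruct j as [|[|[|[|j]]]]; auto; lia.
  - intros b Hb j Hj. apply Hlim; [|lia].
    eapply Rbar_lt_le_trans; [exact Ha0|]. simpl. lra.
Qed.

Lemma step_size_choice c B : 0 < c -> 1 <= B ->
  exists h0, 0 < h0 <= 1 /\ forall h, 0 < h <= h0 ->
    h <= 1 /\ h * B <= 1/2 /\ rate_shift_const B * h <= Rmin c 1.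
Proof.
  intros Hc HB.
  assert (HCX : 1 <= rate_shift_const B).
  { unfold rate_shift_const.
    assert (1 <= B^2) by (apply pow_R1_Rle; lra). assert (1 <= B^3) by (apply pow_R1_Rle; lra).
    assert (1 <= B^4) by (apply pow_R1_Rle; lra). lra. }
  assert (Hm : 0 < Rmin c 1) by (apply Rmin_pos; lra).
  exists (Rmin 1 (Rmin (/ (2 * B)) (Rmin c 1 / rate_shift_const B))).
  assert (H1 := Rmin_l 1 (Rmin (/ (2 * B)) (Rmin c 1 / rate_shift_const B))).
  assert (H2 := Rmin_r 1 (Rmin (/ (2 * B)) (Rmin c 1 / rate_shift_const B))).
  assert (H3 := Rmin_l (/ (2 * B)) (Rmin c 1 / rate_shift_const B)).
  assert (H4 := Rmin_r (/ (2 * B)) (Rmin c 1 / rate_shift_const B)).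
  split.
  - split; [|exact H1]. repeat apply Rmin_pos; try lra.
    + apply Rinv_0_lt_compat. lra.
    + apply Rdiv_lt_0_compat; lra.
  - intros h [Hh Hh0]. split; [lra|split].
    + replace (1/2) with (/ (2 * B) * B) by (field; lra). apply Rmult_le_compat_r; lra.
    + replace (Rmin c 1) with (rate_shift_const B * (Rmin c 1 / rate_shift_const B))
        by (field; lra).
      apply Rmult_le_compat_l; lra.
Qed.

Lemma scaled_error_bound (f : R -> R) (fd : nat -> R -> R)
  (Hf0 : f 0 = 1)
  (Hfd0 : forall x, 0 <= x -> fd 0%nat x = f x)
  (Hder : forall j, (j < 4)%nat -> deriv_on_nonneg (fd j) (fd (S j)))
  (HL1 : forall g : R, Rbar_lt (gamma_min f) g -> forall j, (j <= 4)%nat ->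
     ex_RInt_gen (fun x => Rabs (exp (- (g * x)) * fd j x))
       (at_point 0) (Rbar_locally p_infty))
  (Hlim : forall g : R, Rbar_lt (gamma_min f) g -> forall j, (j <= 4)%nat ->
     is_lim (fun x => exp (- (g * x)) * fd j x) p_infty 0) (a b : R) :
  Rbar_lt (gamma_min f) a ->
  exists C h0, 0 < h0 <= 1 /\ forall s g, 0 < s -> / sqrt s <= h0 -> a <= g <= b ->
   ex_series (Fterm f s (1 - g / sqrt s)) /\
   Rabs (sqrt s * (Series (Fterm f s (1 - g / sqrt s)) - (sqrt s * Lap f g + Mfun f g))
         - Nfun f (fd 1%nat 0) g) <= C / sqrt s /\
   Rabs (Nfun f (fd 1%nat 0) g) <= C.
Proof.
  intros Ha.
  destruct (damped_integrability f fd a Hder HL1 Hlim Ha) as [a0 [J [Ha0 [HJ Hlim']]]].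
  set (c := (a - a0) / 4). set (B := Rabs a + Rabs b + 1).
  assert (Hc : 0 < c) by (unfold c; lra).
  assert (HB : 1 <= B) by (unfold B; generalize (Rabs_pos a) (Rabs_pos b); lra).
  destruct (step_size_choice c B Hc HB) as [h0 [Hh0 Hstep]].
  exists (Rabs (N_bound fd J c B) + Rabs (expansion_error_const J c B)), h0.
  split; [exact Hh0|]. intros s g Hs Hh Hg.
  assert (Hsq : 0 < / sqrt s) by now apply Rinv_0_lt_compat, sqrt_lt_R0.
  destruct (Hstep (/ sqrt s) (conj Hsq Hh)) as [Hh1 [HhB HhC]].
  assert (HgB : Rabs g + 1 <= B) by (unfold B; split_Rabs; lra).
  destruct (scaled_error_pointwise f fd Hf0 Hfd0 Hder a0 J HJ Hlim' s g c B)
    as [Hex Hbound]; auto; [unfold c; lra|].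
  split; [exact Hex|split].
  - eapply Rle_trans; [exact Hbound|]. rewrite Rmult_comm. unfold Rdiv.
    apply Rmult_le_compat_r; [lra|].
    generalize (Rle_abs (expansion_error_const J c B)) (Rabs_pos (N_bound fd J c B)). lra.
  - eapply Rle_trans; [apply (Nfun_bound f fd Hfd0 Hder a0 J HJ g c B Hc); unfold c; lra|].
    generalize (Rle_abs (N_bound fd J c B)) (Rabs_pos (expansion_error_const J c B)). lra.
Qed.

Lemma Rabs_le_of_scaled_error X N C s : 1 <= sqrt s ->
  Rabs (sqrt s * X - N) <= C / sqrt s -> Rabs N <= C -> Rabs X <= 2 * C / sqrt s.
Proof.
  intros Hs HX HN.
  assert (HC : 0 <= C) by (generalize (Rabs_pos N); lra).
  assert (Hi : C / sqrt s <= C).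
  { unfold Rdiv. rewrite <- (Rmult_1_r C) at 2. apply Rmult_le_compat_l; [exact HC|].
    rewrite <- Rinv_1. apply Rinv_le_contravar; lra. }
  assert (HsX : sqrt s * Rabs X <= 2 * C).
  { rewrite <- (Rabs_pos_eq (sqrt s)), <- Rabs_mult by lra.
    replace (sqrt s * X) with ((sqrt s * X - N) + N) by ring.
    eapply Rle_trans; [apply Rabs_triang|lra]. }
  apply Rmult_le_reg_l with (sqrt s); [lra|].
  replace (sqrt s * (2 * C / sqrt s)) with (2 * C) by (field; lra). exact HsX.
Qed.

Lemma inv_sqrt_le h0 s : 0 < h0 -> (/ h0)^2 <= s -> / sqrt s <= h0.
Proof.
  intros Hh Hs.
  assert (H0 : 0 < / h0) by now apply Rinv_0_lt_compat.
  assert (H1 : / h0 <= sqrt s)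
    by (rewrite <- (sqrt_pow2 (/ h0)) by lra; now apply sqrt_le_1_alt).
  rewrite <- (Rinv_inv h0). now apply Rinv_le_contravar.
Qed.

Lemma is_lim_of_scaled_error (u : R -> R) N C h0 : 0 < h0 ->
  (forall s, 0 < s -> / sqrt s <= h0 -> Rabs (u s - N) <= C / sqrt s) ->
  is_lim u p_infty N.
Proof.
  intros Hh0 Hu P [eps HP].
  assert (Heps := cond_pos eps).
  set (K := Rabs C / eps + 1).
  assert (HK : 0 < K) by (unfold K; generalize (Rabs_pos C); intros;
    assert (0 <= Rabs C / eps) by (apply Rdiv_le_0_compat; lra); lra).
  exists (Rmax ((/ h0)^2) (K^2)). intros s Hs.
  assert (Hs1 : (/ h0)^2 <= s) by (generalize (Rmax_l ((/ h0)^2) (K^2)); lra).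
  assert (Hs2 : K^2 <= s) by (generalize (Rmax_r ((/ h0)^2) (K^2)); lra).
  assert (HsK : K <= sqrt s) by (rewrite <- (sqrt_pow2 K) by lra; now apply sqrt_le_1_alt).
  apply HP. change (Rabs (u s - N) < eps).
  eapply Rle_lt_trans; [apply Hu; [nra|now apply inv_sqrt_le]|].
  apply Rle_lt_trans with (Rabs C / sqrt s).
  { unfold Rdiv. apply Rmult_le_compat_r; [left; apply Rinv_0_lt_compat; lra|apply Rle_abs]. }
  apply Rmult_lt_reg_l with (sqrt s); [lra|].
  replace (sqrt s * (Rabs C / sqrt s)) with (Rabs C) by (field; lra).
  apply Rle_lt_trans with (K * eps - eps); [unfold K; right; field; lra|nra].
Qed.

Theorem theorem4p2 (f : R -> R) (fd : nat -> R -> R)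
  (Hnonneg : forall x, 0 <= x -> 0 <= f x)
  (Hnoninc : forall x y, 0 <= x -> x <= y -> f y <= f x)
  (Hf0 : f 0 = 1)
  (Hfd0 : forall x, 0 <= x -> fd 0%nat x = f x)
  (Hder : forall j, (j < 4)%nat -> deriv_on_nonneg (fd j) (fd (S j)))
  (Hcont4 : cont_on_nonneg (fd 4%nat))
  (HL1 : forall g : R, Rbar_lt (gamma_min f) g -> forall j, (j <= 4)%nat ->
     ex_RInt_gen (fun x => Rabs (exp (- (g * x)) * fd j x))
       (at_point 0) (Rbar_locally p_infty))
  (Hlim : forall g : R, Rbar_lt (gamma_min f) g -> forall j, (j <= 4)%nat ->
     is_lim (fun x => exp (- (g * x)) * fd j x) p_infty 0) :
  (forall a b : R, Rbar_lt (gamma_min f) a -> a <= b ->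
     exists C s0, 1 <= s0 /\
       forall s g, s0 <= s -> a <= g <= b -> g <= sqrt s ->
         ex_series (Fterm f s (1 - g / sqrt s)) /\
         Rabs (Series (Fterm f s (1 - g / sqrt s))
               - (sqrt s * Lap f g + Mfun f g)) <= C / sqrt s) /\
  (forall g : R, Rbar_lt (gamma_min f) g ->
     is_lim (fun s => sqrt s * (Series (Fterm f s (1 - g / sqrt s))
                                 - (sqrt s * Lap f g + Mfun f g)))
       p_infty (Nfun f (fd 1%nat 0) g)).
Proof.
  split.
  - intros a b Ha _.
    destruct (scaled_error_bound f fd Hf0 Hfd0 Hder HL1 Hlim a b Ha) as [C [h0 [Hh0 Hest]]].
    exists (2 * C), (Rmax 1 ((/ h0)^2)). split; [apply Rmax_l|].
    intros s g Hs Hg _.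
    assert (Hs1 := Rle_trans _ _ _ (Rmax_l _ _) Hs).
    assert (Hs2 := Rle_trans _ _ _ (Rmax_r _ _) Hs).
    destruct (Hest s g ltac:(lra) (inv_sqrt_le h0 s ltac:(lra) Hs2) Hg) as [Hex [HX HN]].
    split; [exact Hex|].
    apply (Rabs_le_of_scaled_error _ (Nfun f (fd 1%nat 0) g)); [|exact HX|exact HN].
    rewrite <- sqrt_1. now apply sqrt_le_1_alt.
  - intros g Hg.
    destruct (scaled_error_bound f fd Hf0 Hfd0 Hder HL1 Hlim g g Hg) as [C [h0 [Hh0 Hest]]].
    apply (is_lim_of_scaled_error _ _ C h0); [lra|].
    intros s Hs Hh. now apply (Hest s g Hs Hh).
Qed.
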